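(* Let $F$ be a finite field of odd characteristic in which $-1$ is not a square, and let $g:F^3\to\mathbb{C}$ satisfy $g\sim 1$ on its support $G$. Then $$\|\widehat{g}\|_{L^2(P,d\sigma)} \lesssim \|g\|_{L^2(F^3)} + |G|^{3/8}\Big(\sum_{z\in F}\|g_z*K\|_{L^4(F^3)}^2 + \sum_{\substack{z,z'\in F\\ z\neq z'}}\big\|(g_z*K)\,(g_{z'}*K)\big\|_{L^2(F^3)}\Big)^{1/4}.$$
   Context: $e:(F,+)\to\mathbb{C}^\times$ is a fixed nontrivial additive character; $x\cdot y=\sum_i x_iy_i$ on $F^d$; points of $F^3$ are $x=(\underline{x},x_3)$, $\underline{x}\in F^2$. $P=\{(\underline{x},\underline{x}\cdot\underline{x}):\underline{x}\in F^2\}$. $F^3$ carries counting measure: $\|h\|_{L^p(F^3)}=(\sum_x|h(x)|^p)^{1/p}$, $(h_1*h_2)(x)=\sum_{y\in F^3}h_1(y)h_2(x-y)$. $(d\sigma)^{\vee}(x)=|F|^{-2}\sum_{\xi\in P}e(x\cdot\xi)$, $\delta$ is the indicator of $0\in F^3$, and $K:=(d\sigma)^{\vee}-\delta$. $\widehat{g}(\xi)=\sum_{x\in F^3}g(x)e(-x\cdot\xi)$, $\|\widehat{g}\|_{L^2(P,d\sigma)}=(|F|^{-2}\sum_{\xi\in P}|\widehat{g}(\xi)|^2)^{1/2}$. ''$g\sim1$ on its support $G$'' means $G=\{x:g(x)\ne0\}$ and $\tfrac12\le|g|\le2$ on $G$. For $z\in F$, $g_z(x)=g(x)$ if $x_3=z$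 and $g_z(x)=0$ otherwise. $X\lesssim Y$ means $X\le CY$ with $C$ an absolute constant independent of $F$ and $g$. *)

From HB Require Import structures.
From mathcomp Require Import all_boot all_algebra.
From mathcomp Require Import reals.
From mathcomp.real_closed Require Export complex.
Set Implicit Arguments. Unset Strict Implicit. Unset Printing Implicit Defensive.
Import GRing.Theory Num.Theory.
Local Open Scope ring_scope.

Section Defs.
Variables (R : realType) (F : finFieldType).
Local Notation C := (R[i]).

Definition pt := {ffun 'I_3 -> F}.
Definition i2 : 'I_3 := @Ordinal 3 2 isT.

Definition dot (x y : pt) : F := \sum_i x i * y i.

Definition cabs (z : C) : R := Num.sqrt (complex.Re z ^+ 2 + complex.Im z ^+ 2).

Definition paralift (u : {ffun 'I_2 -> F}) : pt :=
  [ffun i : 'I_3 => if (i < 2)%N then u (inord i) else \sum_j u j * u j].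

Definition Pset : {set pt} := [set paralift u | u : {ffun 'I_2 -> F}].

Definition nontriv_add_char (e : F -> C) : Prop :=
  (forall a b, e (a + b) = e a * e b) /\ (forall a, e a != 0) /\ (exists a, e a != 1).

Variable e : F -> C.

Definition qF : R := #|F|%:R.

Definition dsigma_check (x : pt) : C := (#|F|%:R : C) ^- 2 * \sum_(xi in Pset) e (dot x xi).
Definition delta0 (x : pt) : C := (x == 0)%:R.
Definition Kfun (x : pt) : C := dsigma_check x - delta0 x.

Definition fhat (g : pt -> C) (xi : pt) : C := \sum_x g x * e (- dot x xi).

Definition L2P (g : pt -> C) : R :=
  Num.sqrt (qF ^- 2 * \sum_(xi in Pset) cabs (fhat g xi) ^+ 2).

Definition L2 (h : pt -> C) : R := Num.sqrt (\sum_x cabs (h x) ^+ 2).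
Definition L4 (h : pt -> C) : R := Num.sqrt (Num.sqrt (\sum_x cabs (h x) ^+ 4)).

Definition conv (h1 h2 : pt -> C) (x : pt) : C := \sum_y h1 y * h2 (x - y).

Definition slice (g : pt -> C) (z : F) (x : pt) : C := if x i2 == z then g x else 0.

Definition supp (g : pt -> C) : {set pt} := [set x | g x != 0].
Definition sim1 (g : pt -> C) : Prop :=
  forall x, x \in supp g -> 2^-1 <= cabs (g x) <= 2.

End Defs.

(* real powers used in the statement, written with square roots:
   root4 t = t^{1/4},  pow38 t = t^{3/8} for t >= 0 *)
Definition root4 (R : realType) (t : R) : R := Num.sqrt (Num.sqrt t).
Definition pow38 (R : realType) (t : R) : R := Num.sqrt (Num.sqrt (Num.sqrt (t ^+ 3))).

From HB Require Import structures.
From mathcomp Require Import all_boot all_order all_algebra all_field.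
From mathcomp Require Import reals.
From mathcomp.real_closed Require Import complex.
From mathcomp Require Import lra ring.
(* Expanding [|ghat|^2] over the paraboloid gives the Plancherel-type identity
   [||ghat||^2_{L^2(P, d sigma)} = sum_y conj (g y) (g * (d sigma)^vee) y
                                 = ||g||_2^2 + sum_y conj (g y) (g * K) y].
   As [|g| <= 2] on [G] and [g = 0] off [G], the error term is at most
   [2 sum_(y in G) |g * K|], which Hölder bounds by [2 |G|^(3/4) ||g * K||_4].
   Finally [g * K = sum_z g_z * K], and
   [||sum_z h_z||_4^2 = || |sum_z h_z|^2 ||_2 <= sum_(z,z') ||h_z h_z'||_2]
   by the triangle inequality in [L^2]; the diagonal terms are [||h_z||_4^2].
   This yields the bound with constant [2]. *)

Set Implicit Arguments. Unset Strict Implicit. Unset Printing Implicit Defensive.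
Import Order.TTheory GRing.Theory Num.Theory.
(* [ring_scope] is opened last so that [z^*] is [Num.conj], not [conjc]. *)
Local Open Scope complex_scope.
Local Open Scope ring_scope.

Lemma sum_pairs_diag (V : nmodType) (J : finType) (f : J -> J -> V) :
  \sum_(k : J * J) f k.1 k.2 = \sum_z f z z + \sum_z \sum_(z' | z' != z) f z z'.
Proof. by rewrite -pair_bigA /= -big_split; apply: eq_bigr => z _; rewrite (bigD1 z). Qed.

Section CauchySchwarz.
Variable R : rcfType.

Lemma cauchy_schwarz (I : Type) (r : seq I) (P : pred I) (a b : I -> R) :
  (\sum_(i <- r | P i) a i * b i) ^+ 2 <=
  (\sum_(i <- r | P i) a i ^+ 2) * (\sum_(i <- r | P i) b i ^+ 2).
Proof.
set A := \sum_(i <- r | P i) a i ^+ 2; set B := \sum_(i <- r | P i) b i ^+ 2.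
set D := \sum_(i <- r | P i) a i * b i.
have lagrange : \sum_(i <- r | P i) \sum_(j <- r | P j) (a i * b j - a j * b i) ^+ 2
                = 2 * (A * B - D ^+ 2).
  have -> : A * B = \sum_(i <- r | P i) \sum_(j <- r | P j) a i ^+ 2 * b j ^+ 2.
    by rewrite big_distrlr.
  have -> : D ^+ 2 = \sum_(i <- r | P i) \sum_(j <- r | P j) (a i * b i) * (a j * b j).
    by rewrite expr2 big_distrlr.
  have swap : \sum_(i <- r | P i) \sum_(j <- r | P j) a j ^+ 2 * b i ^+ 2
              = \sum_(i <- r | P i) \sum_(j <- r | P j) a i ^+ 2 * b j ^+ 2.
    by rewrite exchange_big.
  rewrite mulrBr [X in X - _]mulr_natl mulr2n -{1}swap -big_split mulr_sumr -sumrB /=.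
  apply: eq_bigr => i _; rewrite -big_split mulr_sumr -sumrB /=.
  by apply: eq_bigr => j _; ring.
have : 0 <= \sum_(i <- r | P i) \sum_(j <- r | P j) (a i * b j - a j * b i) ^+ 2.
  by apply: sumr_ge0 => i _; apply: sumr_ge0 => j _; apply: sqr_ge0.
rewrite lagrange; lra.
Qed.

Lemma cauchy_schwarz_sqrt (I : Type) (r : seq I) (P : pred I) (a b : I -> R) :
  \sum_(i <- r | P i) a i * b i <=
  Num.sqrt (\sum_(i <- r | P i) a i ^+ 2) * Num.sqrt (\sum_(i <- r | P i) b i ^+ 2).
Proof.
have A0 : 0 <= \sum_(i <- r | P i) a i ^+ 2 by apply: sumr_ge0 => i _; apply: sqr_ge0.
rewrite -sqrtrM //; apply: le_trans (ler_norm _) _.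
by rewrite -sqrtr_sqr ler_wsqrtr // cauchy_schwarz.
Qed.

Lemma minkowski_sqr (I J : Type) (r : seq I) (s : seq J) (a : J -> I -> R) :
  \sum_(y <- r) (\sum_(k <- s) a k y) ^+ 2 <=
  (\sum_(k <- s) Num.sqrt (\sum_(y <- r) a k y ^+ 2)) ^+ 2.
Proof.
have -> : \sum_(y <- r) (\sum_(k <- s) a k y) ^+ 2
          = \sum_(k <- s) \sum_(l <- s) \sum_(y <- r) a k y * a l y.
  under eq_bigr do rewrite expr2 big_distrlr /=.
  by rewrite exchange_big; apply: eq_bigr => k _; rewrite exchange_big.
rewrite expr2 big_distrlr /=; apply: ler_sum => k _; apply: ler_sum => l _.
exact: cauchy_schwarz_sqrt.
Qed.

Lemma sum_pow4_le_card (I : finType) (A : {set I}) (h : I -> R) :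
  (forall i, 0 <= h i) ->
  (\sum_(i in A) h i) ^+ 4 <= #|A|%:R ^+ 3 * \sum_i h i ^+ 4.
Proof.
move=> h0; set n : R := #|A|%:R.
have cs_card (f : I -> R) : (\sum_(i in A) f i) ^+ 2 <= n * \sum_(i in A) f i ^+ 2.
  have := cauchy_schwarz (index_enum I) (mem A) (fun=> 1) f.
  by rewrite sumr_const expr1n; under eq_bigr do rewrite mul1r.
have sub4 : \sum_(i in A) h i ^+ 4 <= \sum_i h i ^+ 4.
  rewrite [leRHS](bigID (mem A)) /= lerDl.
  by apply: sumr_ge0 => i _; rewrite exprn_ge0.
have cs2 : (\sum_(i in A) h i ^+ 2) ^+ 2 <= n * \sum_(i in A) h i ^+ 4.
  by apply: le_trans (cs_card _) _; under eq_bigr do rewrite -exprM.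
have n0 : 0 <= n by rewrite ler0n.
apply: (le_trans (y := (n * \sum_(i in A) h i ^+ 2) ^+ 2)).
  rewrite -[4%N]/(2 * 2)%N exprM ler_pXn2r ?nnegrE ?sqr_ge0 ?cs_card //.
  by rewrite mulr_ge0 // sumr_ge0 // => i _; rewrite sqr_ge0.
rewrite exprMn (exprSr n 2) -mulrA; apply: ler_wpM2l; first exact: exprn_ge0.
by apply: le_trans cs2 _; apply: ler_wpM2l.
Qed.

End CauchySchwarz.

Section ComplexModulus.
Variable R : realType.

Lemma cabsE (z : R[i]) : (cabs z)%:C = `|z|.
Proof. by rewrite normc_def. Qed.

Lemma cabs_ge0 (z : R[i]) : 0 <= cabs z.
Proof. exact: sqrtr_ge0. Qed.

Lemma cabs0 : cabs (0 : R[i]) = 0.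
Proof. by apply: complexI; rewrite cabsE normr0. Qed.

Lemma cabsM (z w : R[i]) : cabs (z * w) = cabs z * cabs w.
Proof. by apply: complexI; rewrite rmorphM /= !cabsE normrM. Qed.

Lemma cabs_conj (z : R[i]) : cabs z^* = cabs z.
Proof. by apply: complexI; rewrite !cabsE norm_conjC. Qed.

Lemma cabs_sqr (z : R[i]) : (cabs z ^+ 2)%:C = z * z^*.
Proof. by rewrite rmorphXn /= cabsE normCK. Qed.

Lemma ler_cabs_sum (I : finType) (f : I -> R[i]) :
  cabs (\sum_i f i) <= \sum_i cabs (f i).
Proof.
rewrite -lecR cabsE rmorph_sum /=.
under [leRHS]eq_bigr do rewrite cabsE.
exact: ler_norm_sum.
Qed.

Lemma Re_le_cabs (z : R[i]) : complex.Re z <= cabs z.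
Proof.
by apply: le_trans (ler_norm (complex.Re z)) _; rewrite -lecR cabsE; apply: normc_ge_Re.
Qed.

Lemma ReD (z w : R[i]) : complex.Re (z + w) = complex.Re z + complex.Re w.
Proof. by case: z; case: w. Qed.

End ComplexModulus.

Section AdditiveCharacter.
Variables (R : realType) (F : finFieldType) (e : F -> R[i]).
Hypothesis he : nontriv_add_char e.

Lemma addchar0 : e 0 = 1.
Proof. by case: he => eD [en _]; apply: (mulfI (en 0)); rewrite -eD addr0 mulr1. Qed.

Lemma addcharMn a n : e (a *+ n) = e a ^+ n.
Proof.
case: he => eD _; elim: n => [|n IHn]; first by rewrite mulr0n expr0 addchar0.
by rewrite mulrS exprS eD IHn.
Qed.

(* [e a] is a [p]-th root of unity, [p] the characteristic of [F]. *)
Lemma norm_addchar a : `|e a| = 1.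
Proof.
have [p p_pr charFp] := finPcharP F.
have : `|e a| ^+ p == 1.
  by rewrite -normrX -addcharMn (mulrn_pchar charFp) addchar0 normr1.
by rewrite pexpr_eq1 ?prime_gt0 // => /eqP.
Qed.

Lemma conj_addchar a : (e a)^* = e (- a).
Proof.
case: he => eD [en _]; apply: (mulfI (en a)).
by rewrite -normCK norm_addchar expr1n -eD subrr addchar0.
Qed.

End AdditiveCharacter.

Section Plancherel.
Variables (R : realType) (F : finFieldType) (e : F -> R[i]).
Hypothesis he : nontriv_add_char e.

Lemma dotBl (x y xi : pt F) : dot (y - x) xi = dot y xi - dot x xi.
Proof. by rewrite /dot -sumrB; apply: eq_bigr => i _; rewrite !ffunE mulrBl. Qed.

Lemma fhat_mul_conj (g : pt F -> R[i]) xi :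
  fhat e g xi * (fhat e g xi)^* =
  \sum_x \sum_y g x * (g y)^* * e (dot (y - x) xi).
Proof.
case: (he) => eD _.
rewrite {2}/fhat rmorph_sum.
under [X in _ * X]eq_bigr do rewrite rmorphM /= (conj_addchar he) opprK.
rewrite /fhat big_distrlr /=; apply: eq_bigr => x _; apply: eq_bigr => y _.
by rewrite dotBl eD; ring.
Qed.

Lemma L2P_sqr_conv (g : pt F -> R[i]) :
  (L2P e g ^+ 2)%:C = \sum_y (g y)^* * conv g (dsigma_check e) y.
Proof.
rewrite /L2P sqr_sqrtr; last first.
  by rewrite mulr_ge0 ?invr_ge0 ?exprn_ge0 ?ler0n ?sumr_ge0 // => xi _; rewrite exprn_ge0 ?cabs_ge0.
rewrite rmorphM /= fmorphV rmorphXn /= rmorph_nat rmorph_sum /=.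
under eq_bigr do rewrite cabs_sqr fhat_mul_conj.
transitivity (\sum_(xi in Pset F) \sum_x \sum_y
   (#|F|%:R ^- 2 * (g x * (g y)^* * e (dot (y - x) xi)))).
  rewrite mulr_sumr; apply: eq_bigr => xi _; rewrite mulr_sumr.
  by apply: eq_bigr => x _; rewrite mulr_sumr.
rewrite exchange_big /=; under eq_bigr do rewrite exchange_big /=.
rewrite exchange_big /=; apply: eq_bigr => y _.
rewrite /conv mulr_sumr; apply: eq_bigr => x _.
by rewrite /dsigma_check !mulr_sumr; apply: eq_bigr => xi _; ring.
Qed.

Lemma conv_delta0 (g : pt F -> R[i]) y : conv g (@delta0 R F) y = g y.
Proof.
rewrite /conv (bigD1 y) //= big1 ?addr0; first by rewrite /delta0 subrr eqxx mulr1.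
by move=> x xy; rewrite /delta0 subr_eq0 eq_sym (negPf xy) mulr0.
Qed.

Lemma L2_sqr (g : pt F -> R[i]) : (L2 g ^+ 2)%:C = \sum_y (g y)^* * g y.
Proof.
rewrite /L2 sqr_sqrtr ?sumr_ge0 // => [|y _]; last by rewrite exprn_ge0 ?cabs_ge0.
by rewrite rmorph_sum /=; apply: eq_bigr => y _; rewrite cabs_sqr mulrC.
Qed.

Lemma L2P_sqr_decomp (g : pt F -> R[i]) :
  (L2P e g ^+ 2)%:C = (L2 g ^+ 2)%:C + \sum_y (g y)^* * conv g (Kfun e) y.
Proof.
rewrite L2P_sqr_conv L2_sqr -big_split /=; apply: eq_bigr => y _.
rewrite -conv_delta0 -mulrDr /conv -big_split /=; congr (_ * _).
by apply: eq_bigr => x _; rewrite -mulrDr /Kfun subrKC.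
Qed.

Lemma L2P_sqr_le (g : pt F -> R[i]) :
  L2P e g ^+ 2 <= L2 g ^+ 2 + \sum_y cabs (g y) * cabs (conv g (Kfun e) y).
Proof.
have := congr1 (@complex.Re R) (L2P_sqr_decomp g); rewrite ReD /= => ->.
rewrite lerD2l; apply: le_trans (Re_le_cabs _) _; apply: le_trans (ler_cabs_sum _) _.
by apply: ler_sum => y _; rewrite cabsM cabs_conj.
Qed.

End Plancherel.

Section Estimates.
Variables (R : realType) (F : finFieldType).

Lemma conv_sum_slice (g h : pt F -> R[i]) x :
  conv g h x = \sum_z conv (slice g z) h x.
Proof.
rewrite /conv exchange_big /=; apply: eq_bigr => y _; rewrite -mulr_suml.
rewrite (bigD1 (y i2)) //= big1 ?addr0; first by rewrite /slice eqxx.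
by move=> z /negPf yz; rewrite /slice eq_sym yz.
Qed.

Lemma sum_cabs_mul_le_supp (g h : pt F -> R[i]) : sim1 g ->
  \sum_x cabs (g x) * cabs (h x) <= 2 * \sum_(x in supp g) cabs (h x).
Proof.
move=> hg; rewrite mulr_sumr [leLHS](bigID (mem (supp g))) /=.
rewrite [X in _ + X]big1 ?addr0 => [|x]; last first.
  by rewrite inE negbK => /eqP ->; rewrite cabs0 mul0r.
by apply: ler_sum => x /hg /andP[_ g_le2]; apply: ler_wpM2r; rewrite ?cabs_ge0.
Qed.

Lemma eq_L4 (h1 h2 : pt F -> R[i]) : h1 =1 h2 -> L4 h1 = L4 h2.
Proof. by move=> eq_h; rewrite /L4; under eq_bigr do rewrite eq_h. Qed.

Lemma L4_pow4 (h : pt F -> R[i]) : L4 h ^+ 4 = \sum_x cabs (h x) ^+ 4.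
Proof.
have h4_ge0 : 0 <= \sum_x cabs (h x) ^+ 4.
  by apply: sumr_ge0 => x _; rewrite exprn_ge0 ?cabs_ge0.
by rewrite /L4 -[4%N]/(2 * 2)%N exprM sqr_sqrtr ?sqrtr_ge0 // sqr_sqrtr.
Qed.

Lemma sum_supp_cabs_le_L4 (A : {set pt F}) (h : pt F -> R[i]) :
  (\sum_(x in A) cabs (h x)) ^+ 4 <= #|A|%:R ^+ 3 * L4 h ^+ 4.
Proof. by rewrite L4_pow4; apply: sum_pow4_le_card => x; apply: cabs_ge0. Qed.

Lemma L4_sqr (h : pt F -> R[i]) : L4 h ^+ 2 = L2 (fun x => h x * h x).
Proof.
rewrite /L4 /L2 sqr_sqrtr ?sqrtr_ge0 //; congr Num.sqrt.
by apply: eq_bigr => x _; rewrite cabsM -expr2 -exprM.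
Qed.

Lemma L4_sum_sqr_le (J : finType) (c : J -> pt F -> R[i]) :
  L4 (fun x => \sum_z c z x) ^+ 2 <= \sum_(k : J * J) L2 (fun x => c k.1 x * c k.2 x).
Proof.
set a := fun (k : J * J) x => cabs (c k.1 x * c k.2 x).
have a_ge0 x : 0 <= \sum_k a k x by apply: sumr_ge0 => k _; apply: cabs_ge0.
have sqr_le x : cabs (\sum_z c z x) ^+ 2 <= \sum_k a k x.
  rewrite expr2 -cabsM big_distrlr /= pair_bigA /=.
  exact: (ler_cabs_sum (fun k : J * J => c k.1 x * c k.2 x)).
rewrite -(ler_pXn2r (_ : 0 < 2)%N) ?nnegrE ?exprn_ge0 ?sqrtr_ge0 //; last first.
  by apply: sumr_ge0 => k _; apply: sqrtr_ge0.
rewrite -exprM L4_pow4; apply: le_trans (minkowski_sqr _ _ a).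
apply: ler_sum => x _; rewrite -[4%N]/(2 * 2)%N exprM.
by rewrite ler_pXn2r ?nnegrE ?exprn_ge0 ?cabs_ge0.
Qed.

End Estimates.

Lemma pow38_root4_exp8 (R : realType) (N S : R) : 0 <= N -> 0 <= S ->
  (pow38 N * root4 S) ^+ 8 = N ^+ 3 * S ^+ 2.
Proof.
move=> N0 S0; rewrite exprMn /pow38 /root4 -[8%N]/(2 * 2 * 2)%N !exprM.
by rewrite !sqr_sqrtr ?sqrtr_ge0 ?exprn_ge0.
Qed.

Theorem mainTheorem3 (R : realType) :
  exists c : R, 0 < c /\
  forall (F : finFieldType) (e : F -> R[i]),
    (2%:R : F) != 0 ->
    ~~ [exists x : F, x * x == -1] ->
    nontriv_add_char e ->
    forall g : pt F -> R[i],
      sim1 g ->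
      L2P e g <=
        c * (L2 g
             + pow38 (#|supp g|%:R : R) *
               root4 (\sum_(z : F) L4 (conv (slice g z) (Kfun e)) ^+ 2
                      + \sum_(z : F) \sum_(z' : F | z' != z)
                          L2 (fun x => conv (slice g z) (Kfun e) x
                                       * conv (slice g z') (Kfun e) x))).
Proof.
exists 2; split => // F e _ _ he g hg.
set H := conv g (Kfun e); pose c z := conv (slice g z) (Kfun e).
set N : R := #|supp g|%:R; set S := (X in root4 X); set B := pow38 N * root4 S.
have N0 : 0 <= N by rewrite ler0n.
have B0 : 0 <= B by rewrite mulr_ge0 ?sqrtr_ge0.
have S_eq : S = \sum_(k : F * F) L2 (fun x => c k.1 x * c k.2 x).
  rewrite (sum_pairs_diag (fun z z' => L2 (fun x => c z x * c z' x))).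
  by under [in RHS]eq_bigr do rewrite -L4_sqr.
have S0 : 0 <= S by rewrite S_eq sumr_ge0 // => k _; apply: sqrtr_ge0.
have L4H_le : L4 H ^+ 2 <= S.
  by rewrite S_eq (eq_L4 (conv_sum_slice g (Kfun e))); apply: L4_sum_sqr_le.
have supp_le : \sum_(x in supp g) cabs (H x) <= B ^+ 2.
  rewrite -(ler_pXn2r (_ : 0 < 4)%N) ?nnegrE ?exprn_ge0 //; last first.
    by apply: sumr_ge0 => x _; apply: cabs_ge0.
  rewrite -exprM /B pow38_root4_exp8 //.
  apply: le_trans (sum_supp_cabs_le_L4 _ _) _; apply: ler_wpM2l; first exact: exprn_ge0.
  by rewrite -[4%N]/(2 * 2)%N exprM ler_pXn2r ?nnegrE ?exprn_ge0 ?sqrtr_ge0.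
have L2P_le : L2P e g ^+ 2 <= L2 g ^+ 2 + 2 * B ^+ 2.
  apply: le_trans (L2P_sqr_le he g) _; rewrite lerD2l.
  by apply: le_trans (sum_cabs_mul_le_supp _ hg) _; rewrite ler_pM2l.
have [L2P0 L20] : 0 <= L2P e g /\ 0 <= L2 g by split; apply: sqrtr_ge0.
nra.
Qed.
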